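(* Let $x$ be an aperiodic infinite word over a finite alphabet which is the sesquipower induced by a sequence $\{v_n\}_{n=1}^\infty$ of finite words, and suppose $x$ avoids $k$-anti-powers for some integer $k\ge2$. Then there exists a nonempty word $u$ of length at most $k-1$ such that for every $\ell>0$ there is some $n>0$ such that $u^\ell$ is a factor of $v_n$.
   Context: Given a sequence $\{v_n\}_{n=1}^\infty$ of finite words, define $w_1=v_1$ and $w_{n+1}=w_nv_nw_n$; the limit of $\{w_n\}$ is the sesquipower induced by $\{v_n\}$. An infinite word is aperiodic if no suffix of it equals $u^\omega$ for a finite word $u$. A factor is a contiguous subword; $u^\ell$ is $\ell$ concatenated copies of $u$. A $k$-anti-power is a word $w=w_1\cdots w_k$ with $|w_1|=\cdots=|w_k|\ge1$ and $w_1,\dots,w_k$ pairwise distinct; $x$ avoids $k$-anti-powers if none of its factors is a $k$-anti-power. *)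

From mathcomp Require Import all_boot.
Set Implicit Arguments. Unset Strict Implicit. Unset Printing Implicit Defensive.

Section Words.
Variable A : finType.

(* sesq v k = w_{k+1}, where w_1 = v_1 and w_{n+1} = w_n v_n w_n
   (the sequence v is indexed from 1; v 0 is ignored). *)
Fixpoint sesq (v : nat -> seq A) (k : nat) : seq A :=
  match k with
  | 0 => v 1
  | k'.+1 => sesq v k' ++ v k'.+1 ++ sesq v k'
  end.

Definition prefix_of (w : seq A) (x : nat -> A) : Prop :=
  forall i, i < size w -> x i = nth (x 0) w i.

(* x is the limit of the sequence w_n = sesq v (n-1): every w_n is a prefix
   of x and the lengths are unbounded (so the limit is an infinite word). *)
Definition is_sesquipower (v : nat -> seq A) (x : nat -> A) : Prop :=
  (forall k, prefix_of (sesq v k) x) /\ (forall m, exists k, m <= size (sesq v k)).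

Definition aperiodic (x : nat -> A) : Prop :=
  ~ exists (p : nat) (u : seq A), 0 < size u /\
      forall i, x (p + i) = nth (x 0) u (i %% size u).

Definition factor (x : nat -> A) (i len : nat) : seq A :=
  mkseq (fun t => x (i + t)) len.

Definition anti_power (k : nat) (w : seq A) : Prop :=
  exists m, 0 < m /\ size w = k * m /\
    uniq [seq take m (drop (j * m) w) | j <- iota 0 k].

Definition avoids_anti_powers (k : nat) (x : nat -> A) : Prop :=
  forall i len, ~ anti_power k (factor x i len).

Definition wpow (u : seq A) (l : nat) : seq A := flatten (nseq l u).

End Words.

From mathcomp Require Import all_boot zify.
From Stdlib Require Import Classical.
Set Implicit Arguments. Unset Strict Implicit. Unset Printing Implicit Defensive.

(* Avoiding k-anti-powers means that among any k consecutive blocks of a common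
   length m two coincide.  Comparing the coinciding pairs for k^2 + 2
   consecutive values of m yields arbitrarily long factors of x with a period
   at most k(k^2 + 1); blocks of length p + 1 inside a long p-periodic factor
   then shrink the period below k.  By aperiodicity some w_J has no period
   q < k, and w_J is both a prefix and a suffix of every later w_n, so a long
   q-periodic factor of w_(n+1) = w_n v_n w_n cannot cover a copy of w_J: it
   lies inside w_n or, up to 2|w_J| letters, inside v_n.  Since there are
   finitely many words of length less than k, one of them occurs with every
   exponent. *)

Section PeriodicWindows.
Variable T : Type.
Implicit Types f : nat -> T.

(* [f] has period [q] on the window [i, i + len + q). *)
Definition periodic_on f (i len q : nat) : Prop :=
  forall t, t < len -> f (i + t) = f (i + t + q).

Lemma periodic_on_sub f i len q j len' :
  i <= j -> j + len' <= i + len -> periodic_on f i len q -> periodic_on f j len' q.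
Proof.
move=> ij hlen per t tl; have := per (j - i + t); rewrite !addnA subnKC //; apply; lia.
Qed.

Lemma periodic_on_mod f i len q t :
  periodic_on f i len q -> t < len + q -> f (i + t) = f (i + t %% q).
Proof.
case: q => [|q] per; first by rewrite modn0.
elim/ltn_ind: t => t IH tl.
have [tq|qt] := ltnP t q.+1; first by rewrite modn_small.
rewrite -(subnK qt) modnDr addnA -per; first apply: IH.
all: lia.
Qed.

Lemma periodic_on_congr f i len q a b :
  periodic_on f i len q -> a < len + q -> b < len + q -> a = b %[mod q] ->
  f (i + a) = f (i + b).
Proof.
by move=> per al bl ab; rewrite (periodic_on_mod per al) (periodic_on_mod per bl) ab.
Qed.

Lemma periodic_on_defect f i len q t :
  periodic_on f i len q -> f t <> f (t + q) -> t < i \/ i + len <= t.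
Proof.
move=> per ft; have [|it] := ltnP t i; first by left.
right; rewrite leqNgt; apply/negP => tl; apply: ft.
have := per (t - i); rewrite subnKC //; apply; lia.
Qed.

End PeriodicWindows.

Lemma nth_cat_size (T : Type) (d : T) (s1 s2 : seq T) n :
  nth d (s1 ++ s2) (size s1 + n) = nth d s2 n.
Proof. by rewrite nth_cat ltnNge leq_addr addKn. Qed.

Section PeriodicFactors.
Variables (T : Type) (d : T).

Definition periodic_factor (s : seq T) (len q : nat) : Prop :=
  exists2 i, i + len + q <= size s & periodic_on (nth d s) i len q.

Lemma periodic_on_catl s1 s2 i len q : i + len + q <= size s1 ->
  periodic_on (nth d (s1 ++ s2)) i len q -> periodic_on (nth d s1) i len q.
Proof.
move=> hs per t tl; have := per t tl.
have lt1 : i + t < size s1 by lia.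
have lt2 : i + t + q < size s1 by lia.
by rewrite !nth_cat lt1 lt2.
Qed.

Lemma periodic_on_catr s1 s2 i len q :
  periodic_on (nth d (s1 ++ s2)) (size s1 + i) len q -> periodic_on (nth d s2) i len q.
Proof. by move=> per t /per; rewrite -!addnA !nth_cat_size !addnA. Qed.

End PeriodicFactors.

Section DefectiveBorders.
Variables (T : eqType) (d : T) (P : seq T) (q t0 : nat).
Hypotheses (t0q_lt : t0 + q < size P) (P_defect : nth d P t0 <> nth d P (t0 + q)).

Lemma periodic_factor_cat3 W1 u W2 len : 2 * size P <= len ->
  suffix P W1 -> prefix P W2 -> periodic_factor d (W1 ++ u ++ W2) len q ->
  [\/ periodic_factor d W1 len q, periodic_factor d W2 len q
    | periodic_factor d u (len - 2 * size P) q].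
Proof.
move=> Plen /suffixP[s1 ->] /prefixP[s2 ->] [i ilen].
rewrite -!catA !size_cat in ilen * => per.
have defect_at s s' :
    nth d (s ++ P ++ s') (size s + t0) <> nth d (s ++ P ++ s') (size s + t0 + q).
  have t0_lt : t0 < size P by lia.
  by rewrite -addnA !nth_cat_size !nth_cat t0_lt t0q_lt.
have D1 := defect_at s1 (u ++ P ++ s2).
have D2 := defect_at (s1 ++ P ++ u) s2; rewrite -!catA !size_cat in D2.
(* The window contains neither copy of the defect of [P] around [u]. *)
case: (periodic_on_defect per D2) (periodic_on_defect per D1) =>
  [after2|before2] [after1|before1].
- apply: Or32; exists (i - size (s1 ++ P ++ u)); first by rewrite !size_cat; lia.
  apply: (periodic_on_catr (s1 := s1 ++ P ++ u)); rewrite subnKC -?catA // !size_cat; lia.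
- lia.
- apply: Or33; exists (i - size (s1 ++ P)); first by rewrite !size_cat; lia.
  apply: (periodic_on_catl (s2 := P ++ s2)); first by rewrite !size_cat; lia.
  apply: (periodic_on_catr (s1 := s1 ++ P)); rewrite -!catA.
  by apply: periodic_on_sub per; rewrite !size_cat; lia.
- apply: Or31; exists i; first by rewrite size_cat; lia.
  by apply: (periodic_on_catl (s2 := u ++ P ++ s2)); rewrite -?catA // size_cat; lia.
Qed.

End DefectiveBorders.

Section Sesquipowers.
Variables (A : finType) (v : nat -> seq A).

Lemma sesq_prefix m n : m <= n -> prefix (sesq v m) (sesq v n).
Proof.
move/subnK <-; elim: (n - m) => [|r IH]; first by rewrite add0n prefix_refl.
by rewrite addSn; apply: prefix_trans IH (prefix_prefix _ _).
Qed.

Lemma sesq_suffix m n : m <= n -> suffix (sesq v m) (sesq v n).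
Proof.
move/subnK <-; elim: (n - m) => [|r IH]; first by rewrite add0n suffix_refl.
rewrite addSn; apply: suffix_trans IH (suffix_trans (suffix_suffix _ _) (suffix_suffix _ _)).
Qed.

Lemma periodic_factor_sesq (d : A) J q t0 len :
  t0 + q < size (sesq v J) -> nth d (sesq v J) t0 <> nth d (sesq v J) (t0 + q) ->
  2 * size (sesq v J) <= len ->
  forall m, periodic_factor d (sesq v (J + m)) len q ->
  exists2 n, 0 < n & periodic_factor d (v n) (len - 2 * size (sesq v J)) q.
Proof.
move=> t0q defect Plen; elim=> [|m IH]; first by rewrite addn0 => -[i ilen]; exfalso; lia.
rewrite addnS => /(periodic_factor_cat3 t0q defect Plen
  (sesq_suffix (leq_addr m J)) (sesq_prefix (leq_addr m J))) [/IH|/IH|] //.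
by exists (J + m).+1.
Qed.

Lemma sesq_periodic_factor (x : nat -> A) J i len q :
  is_sesquipower v x -> periodic_on x i len q ->
  exists m, periodic_factor (x 0) (sesq v (J + m)) len q.
Proof.
move=> [x_pre x_unb] per; have [m m_big] := x_unb (i + len + q).
have Jm_big : i + len + q <= size (sesq v (J + m)).
  exact: leq_trans m_big (size_prefix (sesq_prefix (leq_addl J m))).
exists m, i => // t tl; rewrite -!x_pre; [exact: per | lia | lia].
Qed.

End Sesquipowers.

Section Powers.
Variable A : finType.
Implicit Types u s : seq A.

Lemma size_wpow u l : size (wpow u l) = l * size u.
Proof. by elim: l => //= l IH; rewrite size_cat IH mulSn. Qed.

Lemma nth_wpow (d : A) u l t : t < l * size u ->
  nth d (wpow u l) t = nth d u (t %% size u).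
Proof.
elim: l t => [|l IH] t //; rewrite mulSn /= nth_cat => tl.
have [tu|ut] := ltnP t (size u); first by rewrite modn_small.
rewrite IH; last lia.
by rewrite -[in RHS](subnK ut) modnDr.
Qed.

Lemma wpow_prefix u l l' : l' <= l -> prefix (wpow u l') (wpow u l).
Proof. by move/subnKC <-; rewrite /wpow nseqD flatten_cat prefix_prefix. Qed.

Lemma periodic_factor_wpow (d : A) s len q l : 0 < q -> l * q <= len + q ->
  periodic_factor d s len q -> exists2 u, size u = q & infix (wpow u l) s.
Proof.
move=> q0 lq [i ilen per]; set u := take q (drop i s).
have su : size u = q by rewrite size_takel // size_drop; lia.
exists u => //.
have -> : wpow u l = take (l * q) (drop i s).
  apply: (@eq_from_nth _ d); first by rewrite size_wpow su size_takel // size_drop; lia.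
  move=> t; rewrite size_wpow su => tl.
  rewrite nth_wpow su // nth_take // /u nth_take; last exact: ltn_pmod.
  rewrite !nth_drop -(periodic_on_mod per) //; lia.
apply/infixP; exists (take i s), (drop (l * q) (drop i s)).
by rewrite !cat_take_drop.
Qed.

End Powers.

Lemma ltn_pigeonhole (T : finType) n (h : 'I_n -> T) :
  #|T| < n -> exists j1 j2 : 'I_n, j1 < j2 /\ h j1 = h j2.
Proof.
move=> Tn; have /injectivePn[j1 [j2 j12 e]] : ~~ injectiveb h.
  by apply: contraL Tn => /injectiveP/leq_card; rewrite card_ord -leqNgt.
have [j1_lt|j2_lt|j1_j2] := ltngtP j1 j2; [by exists j1, j2 | by exists j2, j1 |].
by case/eqP: j12; apply: val_inj.
Qed.

Section Blocks.
Variables (A : finType) (x : nat -> A).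

Lemma periodic_on_of_block_agreements M a b m1 m2 :
  a <= b -> m1 <= m2 -> M + a * (m2 - m1) <= m1 ->
  (forall t, t < m1 -> x (a * m1 + t) = x (b * m1 + t)) ->
  (forall t, t < m2 -> x (a * m2 + t) = x (b * m2 + t)) ->
  periodic_on x (a * m2 + (b - a) * m1) M ((b - a) * (m2 - m1)).
Proof.
move=> ab m12 hM agree1 agree2 t tM.
(* With d = m2 - m1: x (b m1 + a d + t) = x (a m1 + a d + t) = x (a m2 + t) = x (b m2 + t). *)
have -> : a * m2 + (b - a) * m1 + t = b * m1 + (a * (m2 - m1) + t).
  by rewrite -(subnKC ab) -(subnKC m12); nia.
rewrite -agree1; last lia.
have -> : a * m1 + (a * (m2 - m1) + t) = a * m2 + t by rewrite -(subnKC m12); nia.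
by rewrite agree2; [congr x; rewrite -(subnKC ab) -(subnKC m12); nia | lia].
Qed.

Variable k : nat.
Hypothesis x_avoids : avoids_anti_powers k x.

Lemma equal_blocks i m : 0 < m -> exists a b, [/\ a < b, b < k &
  forall t, t < m -> x (i + a * m + t) = x (i + b * m + t)].
Proof.
move=> m0; set blocks := [seq take m (drop (j * m) (factor x i (k * m))) | j <- iota 0 k].
have /(uniqPn [::])[a [b [ab bk]]] : ~~ uniq blocks.
  by apply/negP => uniq_blocks; apply: (@x_avoids i (k * m)); exists m; rewrite size_mkseq.
rewrite size_map size_iota in bk; have ak : a < k by apply: ltn_trans bk.
rewrite !(nth_map 0) ?size_iota // !nth_iota // => same.
exists a, b; split=> // t tm; move/(congr1 (nth (x 0) ^~ t)): same.
have amk : a * m + t < k * m by nia.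
have bmk : b * m + t < k * m by nia.
by rewrite !nth_take // !nth_drop !nth_mkseq // !add0n !addnA.
Qed.

Lemma long_bounded_period_window M :
  exists i p, [/\ 0 < p, p <= k * (k * k).+1 & periodic_on x i M p].
Proof.
pose m0 := (M + k * (k * k).+1).+1.
pose agree m (ab : 'I_k * 'I_k) :=
  (ab.1 < ab.2) && [forall t : 'I_m, x (ab.1 * m + t) == x (ab.2 * m + t)].
pose h (j : 'I_(k * k).+2) := [pick ab | agree (m0 + j) ab].
have h_agree j : exists2 ab, h j = Some ab & agree (m0 + j) ab.
  rewrite /h; case: pickP => [ab|none]; first by exists ab.
  have [a [b [ab bk same]]] := equal_blocks 0 (ltn0Sn (M + k * (k * k).+1 + j)).
  case/negP: (none (Ordinal (ltn_trans ab bk), Ordinal bk)); rewrite /agree /= ab.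
  by apply/forallP => t; apply/eqP; have := same t (ltn_ord t); rewrite !add0n.
have [|j1 [j2 [j12 hj]]] := ltn_pigeonhole h; first by rewrite card_option card_prod card_ord.
have [ab h1 /andP[ab12 /forallP agree1]] := h_agree j1.
have [ab' h2 /andP[_ /forallP agree2]] := h_agree j2.
move: h2; rewrite -hj h1 => -[ab'_eq]; subst ab'.
have ab2_lt := ltn_ord ab.2.
exists (ab.1 * (m0 + j2) + (ab.2 - ab.1) * (m0 + j1)), ((ab.2 - ab.1) * (m0 + j2 - (m0 + j1))).
split.
- by rewrite muln_gt0 !subn_gt0 ab12 ltn_add2l.
- apply: leq_mul; first lia.
  by rewrite subnDl; have := ltn_ord j2; lia.
- apply: periodic_on_of_block_agreements; [exact: ltnW | lia | | | ].
  + rewrite subnDl; have := ltn_ord j2; have := ltn_ord ab.1; nia.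
  + by move=> t tm; apply/eqP: (agree1 (Ordinal tm)).
  + by move=> t tm; apply/eqP: (agree2 (Ordinal tm)).
Qed.

Lemma shorter_period_window i len p len' : 0 < p -> len' + k * p.+1 <= len ->
  periodic_on x i len p -> exists i' g, [/\ 0 < g, g < k & periodic_on x i' len' g].
Proof.
move=> p0 hlen per.
have [j [j' [jj' j'k same]]] := equal_blocks i (ltn0Sn p).
have j'p : j'.+1 * p.+1 <= k * p.+1 by rewrite leq_mul2r j'k orbT.
(* Block j' is block j shifted by (j' - j)(p + 1), that is by j' - j modulo p. *)
exists (i + j * p.+1), (j' - j); split; [lia | lia | move=> t tl].
have tp : t %% p < p.+1 by rewrite ltnS ltnW // ltn_pmod.
have start : x (i + j * p.+1 + t) = x (i + j * p.+1 + t %% p).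
  rewrite -!addnA; apply: (periodic_on_congr per); [nia | nia | by rewrite modnDmr].
have finish : x (i + j' * p.+1 + t %% p) = x (i + j * p.+1 + t + (j' - j)).
  rewrite -!addnA; apply: (periodic_on_congr per); [nia | nia |].
  have -> : j' * p.+1 + t %% p = j' * p + (j' + t %% p) by rewrite mulnS; lia.
  have -> : j * p.+1 + (t + (j' - j)) = j * p + (j' + t) by rewrite mulnS; lia.
  by rewrite !modnMDl modnDmr.
by rewrite start same.
Qed.

Lemma small_period_window M : exists i q, [/\ 0 < q, q < k & periodic_on x i M q].
Proof.
have [i [p [p0 pk per]]] := long_bounded_period_window (M + k * (k * (k * k).+1).+1).
by apply: shorter_period_window p0 _ per; rewrite leq_add2l leq_mul2l ltnS pk orbT.
Qed.

End Blocks.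

Section Aperiodic.
Variables (A : finType) (x : nat -> A).
Hypothesis x_aperiodic : aperiodic x.

Lemma aperiodic_defect q : 0 < q -> exists t, x t <> x (t + q).
Proof.
move=> q0; apply: NNPP => no_defect; apply: x_aperiodic.
exists 0, (mkseq x q); rewrite size_mkseq; split=> // t.
have per : periodic_on x 0 t q.
  by move=> s _; apply: NNPP => ne; apply: no_defect; exists (0 + s).
by rewrite add0n nth_mkseq ?ltn_pmod // -[t]add0n (periodic_on_mod per) //; lia.
Qed.

Lemma aperiodic_defects_below K : exists B, forall q, 0 < q <= K ->
  exists2 t, t + q < B & x t <> x (t + q).
Proof.
elim: K => [|K [B HB]]; first by exists 0 => q; lia.
have [t ne] := aperiodic_defect (ltn0Sn K).
exists (maxn B (t + K.+1).+1) => q /andP[q0]; rewrite leq_eqVlt ltnS => /orP[/eqP-> | qK].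
  by exists t => //; rewrite leq_max ltnSn orbT.
have /HB[t' t'B ne'] : 0 < q <= K by lia.
by exists t' => //; rewrite leq_max t'B.
Qed.

End Aperiodic.

Definition words_up_to (A : finType) (n : nat) : seq (seq A) :=
  flatten [seq [seq val w | w <- enum {: q.-tuple A}] | q <- iota 1 n].

Lemma mem_words_up_to (A : finType) n (w : seq A) :
  (w \in words_up_to A n) = (0 < size w <= n).
Proof.
apply/flattenP/idP => [[ws /mapP[q q_in ->] /mapP[t _ ->]] | w_size].
  by rewrite size_tuple; move: q_in; rewrite mem_iota; lia.
exists [seq val t | t <- enum {: (size w).-tuple A}].
  by apply/mapP; exists (size w) => //; rewrite mem_iota; lia.
by apply/mapP; exists (in_tuple w); rewrite ?mem_enum.
Qed.

Lemma antitone_pigeonhole (T : eqType) (S : seq T) (G : T -> nat -> Prop) :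
  (forall u l l', l' <= l -> G u l -> G u l') ->
  (forall l, exists2 u, u \in S & G u l) -> exists2 u, u \in S & forall l, G u l.
Proof.
move=> antitone; elim: S => [|a S IH] ex_u; first by have [] := ex_u 0.
have [Ga|] := classic (forall l, G a l); first by exists a; rewrite ?mem_head.
move=> /not_all_ex_not[la nGa].
have [u uS Gu] : exists2 u, u \in S & forall l, G u l.
  apply: IH => l; have [u] := ex_u (maxn l la); rewrite inE => /predU1P[->|uS] Gu.
  - by case: nGa; apply: antitone Gu; rewrite leq_maxr.
  - by exists u => //; apply: antitone Gu; rewrite leq_maxl.
by exists u; rewrite // inE uS orbT.
Qed.

Lemma exists_short_power_factor (A : finType) (v : nat -> seq A) x k l :
  aperiodic x -> is_sesquipower v x -> avoids_anti_powers k x ->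
  exists2 u, u \in words_up_to A (k - 1) & exists n, 0 < n /\ infix (wpow u l) (v n).
Proof.
move=> x_aperiodic x_sesq x_avoids.
have [B defects] := aperiodic_defects_below x_aperiodic (k - 1).
have [J JB] := x_sesq.2 B.
have [i [q [q0 qk per]]] := small_period_window x_avoids (2 * size (sesq v J) + l * k).
have [m fac] := sesq_periodic_factor J x_sesq per.
have /defects[t0 t0q ne] : 0 < q <= k - 1 by lia.
have [|||n n0 facn] := periodic_factor_sesq (t0 := t0) _ _ _ fac.
- lia.
- by rewrite -!x_sesq.1 //; lia.
- lia.
have [|u su inf] := periodic_factor_wpow (l := l) q0 _ facn.
  have : l * q <= l * k by rewrite leq_mul2l ltnW ?orbT.
  lia.
by exists u; [rewrite mem_words_up_to su; lia | exists n].
Qed.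

Theorem theorem4p14 (A : finType) (v : nat -> seq A) (x : nat -> A) (k : nat) :
  2 <= k ->
  aperiodic x ->
  is_sesquipower v x ->
  avoids_anti_powers k x ->
  exists u : seq A, 0 < size u /\ size u <= k - 1 /\
    forall l, 0 < l -> exists n, 0 < n /\ infix (wpow u l) (v n).
Proof.
move=> _ x_aperiodic x_sesq x_avoids.
have [|u] := @antitone_pigeonhole _ (words_up_to A (k - 1))
  (fun u l => exists n, 0 < n /\ infix (wpow u l) (v n)) _
  (fun l => exists_short_power_factor l x_aperiodic x_sesq x_avoids).
  move=> u l l' l'l [n [n0 inf]]; exists n; split=> //.
  exact: infix_trans (prefixW (wpow_prefix u l'l)) inf.
rewrite mem_words_up_to => /andP[u0 uk] powers.
by exists u; split=> //; split=> // l _; apply: powers.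
Qed.
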